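(* Suppose A1–A3 and A4' hold and let $\{x_k\}$ be generated by Algorithm 1. Then $\lim_{k\to\infty}\|\nabla f(x_k)\|=0$.
   Context: Let $(X,\langle\cdot,\cdot\rangle)$ be a real Hilbert space with induced norm $\|\cdot\|$, and $f:X\to\mathbb{R}$ Fréchet differentiable with gradient $\nabla f$. Algorithm 1 (general non-monotone descent algorithm): parameters $x_0\in X$, $\alpha_0>0$, $\beta,\rho\in(0,1)$. For $k=0,1,2,\dots$: choose $d_k\in X$ with $\langle\nabla f(x_k),d_k\rangle<0$; then for $l=0,1,2,\dots$ choose a number $\nu_{k,l}\ge 0$ and test $$f(x_k+\alpha_k\beta^l d_k)\le f(x_k)+\rho\alpha_k\beta^l\langle\nabla f(x_k),d_k\rangle+\nu_{k,l};$$ let $l_k$ be the first $l$ for which this holds, set $\nu_k:=\nu_{k,l_k}$, $x_{k+1}=x_k+\alpha_k\beta^{l_k}d_k$ and $\alpha_{k+1}=\alpha_k\beta^{l_k-1}$. It is assumed the algorithm generates infinite sequences (all $l_k$ finite). Assumptions: A1: $\nabla f$ is Lipschitz continuous with constant $L>0$. A2: there is $f_{low}\in\mathbb{R}$ with $f(x)\ge f_{low}$ for all $x\in X$. A3: there are constants $c_1,c_2>0$ with $\langle\nabla f(x_k),d_k\rangle\le -c_1\|\nabla f(x_k)\|^2$ and $\|d_k\|\le c_2\|\nabla f(x_k)\|$ for all $k$. A4': $\nu_k=o(\|\nabla f(x_k)\|^2)$, i.e. for every $\delta>0$ there is $n\in\mathbb{N}$ with $\nu_k\le\delta\|\nabla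 f(x_k)\|^2$ for all $k\ge n$. *)

From Stdlib Require Import Reals Lra Lia ZArith.
Open Scope R_scope.

Record Hilbert := {
  hcar :> Type;
  hzero : hcar;
  hadd : hcar -> hcar -> hcar;
  hopp : hcar -> hcar;
  hscal : R -> hcar -> hcar;
  hinner : hcar -> hcar -> R;
  hadd_assoc : forall x y z, hadd x (hadd y z) = hadd (hadd x y) z;
  hadd_comm : forall x y, hadd x y = hadd y x;
  hadd_0 : forall x, hadd x hzero = x;
  hadd_opp : forall x, hadd x (hopp x) = hzero;
  hscal_1 : forall x, hscal 1 x = x;
  hscal_assoc : forall a b x, hscal a (hscal b x) = hscal (a * b) x;
  hscal_distr_l : forall a b x, hscal (a + b) x = hadd (hscal a x) (hscal b x);
  hscal_distr_r : forall a x y, hscal a (hadd x y) = hadd (hscal a x) (hscal a y);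
  hinner_sym : forall x y, hinner x y = hinner y x;
  hinner_add : forall x y z, hinner (hadd x y) z = hinner x z + hinner y z;
  hinner_scal : forall a x y, hinner (hscal a x) y = a * hinner x y;
  hinner_pos : forall x, 0 <= hinner x x;
  hinner_def : forall x, hinner x x = 0 -> x = hzero;
  hcomplete : forall u : nat -> hcar,
    (forall eps, eps > 0 -> exists N, forall m n, (m >= N)%nat -> (n >= N)%nat ->
        sqrt (hinner (hadd (u m) (hopp (u n))) (hadd (u m) (hopp (u n)))) < eps) ->
    exists l, forall eps, eps > 0 -> exists N, forall n, (n >= N)%nat ->
        sqrt (hinner (hadd (u n) (hopp l)) (hadd (u n) (hopp l))) < eps
}.

Arguments hzero {h}.
Arguments hadd {h}.
Arguments hopp {h}.
Arguments hscal {h}.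
Arguments hinner {h}.

Definition hnorm {X : Hilbert} (x : X) : R := sqrt (hinner x x).

Definition frechet_gradient {X : Hilbert} (f : X -> R) (g : X -> X) : Prop :=
  forall x : X, forall eps, eps > 0 -> exists delta, delta > 0 /\
    forall h : X, hnorm h < delta ->
      Rabs (f (hadd x h) - f x - hinner (g x) h) <= eps * hnorm h.

Definition armijo_test {X : Hilbert} (f : X -> R) (g : X -> X) (rho : R)
  (xk dk : X) (ak beta nu : R) (l : nat) : Prop :=
  f (hadd xk (hscal (ak * beta ^ l) dk))
    <= f xk + rho * ak * beta ^ l * hinner (g xk) dk + nu.

Definition algorithm1 {X : Hilbert} (f : X -> R) (g : X -> X)
  (x0 : X) (alpha0 beta rho : R)
  (x d : nat -> X) (alpha : nat -> R) (lk : nat -> nat) (nu : nat -> nat -> R) : Prop :=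
  alpha0 > 0 /\ 0 < beta < 1 /\ 0 < rho < 1 /\
  x 0%nat = x0 /\ alpha 0%nat = alpha0 /\
  (forall k, hinner (g (x k)) (d k) < 0) /\
  (forall k l, nu k l >= 0) /\
  (forall k, armijo_test f g rho (x k) (d k) (alpha k) beta (nu k (lk k)) (lk k)) /\
  (forall k l, (l < lk k)%nat ->
      ~ armijo_test f g rho (x k) (d k) (alpha k) beta (nu k l) l) /\
  (forall k, x (S k) = hadd (x k) (hscal (alpha k * beta ^ (lk k)) (d k))) /\
  (forall k, alpha (S k) = alpha k * powerRZ beta (Z.of_nat (lk k) - 1)).

From Stdlib Require Import Reals Lra Lia ZArith.
Open Scope R_scope.

(* The mean value theorem and the Lipschitz gradient give the descent lemma
   f(x + s d) <= f(x) + s <g(x), d> + L s^2 |d|^2, so any trial step shorter than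
   tau = (1 - rho) c1 / (L c2^2) passes the Armijo test.  Hence a rejected step
   exceeds tau, and since alpha_{k+1} is the last rejected trial step (or alpha_k / beta
   if none was rejected), alpha_k >= min(alpha0, tau) for all k.  The accepted step
   beta alpha_{k+1} then yields f(x_{k+1}) <= f(x_k) - rho c1 beta min(alpha0, tau)
   |g(x_k)|^2 + nu_k; by A4' the error nu_k eventually absorbs at most half of this
   decrease, and as f is bounded below the telescoping sum forces |g(x_k)| -> 0. *)

Section InnerProduct.

Context {X : Hilbert}.

Lemma hinner_0_l (y : X) : hinner hzero y = 0.
Proof.
  assert (E := hinner_add X hzero hzero y).
  rewrite hadd_0 in E. lra.
Qed.

Lemma hinner_0_r (y : X) : hinner y hzero = 0.
Proof. rewrite hinner_sym. apply hinner_0_l. Qed.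

Lemma hinner_add_r (x y z : X) : hinner x (hadd y z) = hinner x y + hinner x z.
Proof. rewrite hinner_sym, hinner_add, (hinner_sym X y), (hinner_sym X z). reflexivity. Qed.

Lemma hinner_scal_r (a : R) (x y : X) : hinner x (hscal a y) = a * hinner x y.
Proof. rewrite hinner_sym, hinner_scal, (hinner_sym X y). reflexivity. Qed.

Lemma hinner_opp_l (x y : X) : hinner (hopp x) y = - hinner x y.
Proof.
  assert (E := hinner_add X x (hopp x) y).
  rewrite hadd_opp, hinner_0_l in E. lra.
Qed.

Lemma hscal_0_l (d : X) : hscal 0 d = hzero.
Proof.
  apply hinner_def.
  rewrite hinner_scal, Rmult_0_l. reflexivity.
Qed.

Lemma hadd_subK (x y : X) : hadd (hadd x y) (hopp x) = y.
Proof. rewrite (hadd_comm X x), <- hadd_assoc, hadd_opp, hadd_0. reflexivity. Qed.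

Lemma hnorm_ge0 (x : X) : 0 <= hnorm x.
Proof. apply sqrt_pos. Qed.

Lemma hnorm_scal (c : R) (d : X) : hnorm (hscal c d) = Rabs c * hnorm d.
Proof.
  unfold hnorm.
  rewrite hinner_scal, hinner_scal_r, <- Rmult_assoc, sqrt_mult_alt by apply Rle_0_sqr.
  rewrite <- sqrt_Rsqr_abs. reflexivity.
Qed.

Lemma hinner_sq_le (u v : X) : hinner u v ^ 2 <= hinner u u * hinner v v.
Proof.
  set (a := hinner u u); set (b := hinner u v); set (c := hinner v v).
  destruct (Req_dec c 0) as [Hc0 | Hc0].
  - assert (Hv : v = hzero) by (apply hinner_def; exact Hc0).
    unfold b. rewrite Hc0, Hv, hinner_0_r. nra.
  - (* 0 <= |c u - b v|^2 = c (a c - b^2) *)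
    assert (P := hinner_pos X (hadd (hscal c u) (hscal (- b) v))).
    rewrite hinner_add, !hinner_add_r, !hinner_scal, !hinner_scal_r,
      (hinner_sym X v u) in P.
    fold a b c in P.
    assert (Hc : 0 <= c) by apply hinner_pos.
    assert (0 <= c * (a * c - b * b)) by nra.
    nra.
Qed.

Lemma cauchy_schwarz (u v : X) : hinner u v <= hnorm u * hnorm v.
Proof.
  unfold hnorm. rewrite <- sqrt_mult_alt by apply hinner_pos.
  apply Rle_trans with (Rabs (hinner u v)); [apply Rle_abs |].
  rewrite <- sqrt_Rsqr_abs. apply sqrt_le_1_alt.
  rewrite Rsqr_pow2. apply hinner_sq_le.
Qed.

End InnerProduct.

Section Descent.

Context {X : Hilbert} (f : X -> R) (g : X -> X).
Hypothesis Hgrad : frechet_gradient f g.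

Lemma derivable_pt_lim_line (x d : X) (s : R) :
  derivable_pt_lim (fun t => f (hadd x (hscal t d))) s
    (hinner (g (hadd x (hscal s d))) d).
Proof.
  intros eps Heps.
  set (y := hadd x (hscal s d)); set (N := hnorm d).
  assert (HN : 0 <= N) by apply hnorm_ge0.
  destruct (Hgrad y (eps / (N + 1))) as [del [Hdel Hy]].
  { apply Rdiv_lt_0_compat; lra. }
  assert (Hstep : 0 < del / (N + 1)) by (apply Rdiv_lt_0_compat; lra).
  exists (mkposreal _ Hstep); simpl; intros h Hh0 Hh.
  assert (Hsh : hadd x (hscal (s + h) d) = hadd y (hscal h d)).
  { unfold y. rewrite <- hadd_assoc, <- hscal_distr_l. reflexivity. }
  assert (Hah : 0 < Rabs h) by (apply Rabs_pos_lt; exact Hh0).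
  assert (Hsmall : hnorm (hscal h d) < del).
  { rewrite hnorm_scal. fold N.
    apply Rmult_lt_compat_r with (r := N + 1) in Hh; [| lra].
    unfold Rdiv in Hh. rewrite Rmult_assoc, Rinv_l, Rmult_1_r in Hh by lra.
    nra. }
  specialize (Hy _ Hsmall).
  rewrite hnorm_scal, hinner_scal_r in Hy. fold N in Hy.
  rewrite Hsh.
  replace ((f (hadd y (hscal h d)) - f y) / h - hinner (g y) d)
    with ((f (hadd y (hscal h d)) - f y - h * hinner (g y) d) / h) by (field; exact Hh0).
  unfold Rdiv at 1. rewrite Rabs_mult, Rabs_inv.
  apply Rmult_lt_reg_r with (Rabs h); [exact Hah |].
  rewrite Rmult_assoc, Rinv_l, Rmult_1_r by lra.
  (* the Fréchet bound is [eps N / (N + 1) * |h|], strictly below [eps |h|] *)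
  apply Rle_lt_trans with (eps / (N + 1) * (Rabs h * N)); [exact Hy |].
  apply Rmult_lt_reg_r with (N + 1); [lra |].
  unfold Rdiv. replace (eps * / (N + 1) * (Rabs h * N) * (N + 1))
    with (eps * Rabs h * N) by (field; lra).
  nra.
Qed.

Context (L : R) (HL : L > 0)
  (HA1 : forall y z : X, hnorm (hadd (g y) (hopp (g z))) <= L * hnorm (hadd y (hopp z))).

Lemma descent_lemma (x d : X) (s : R) :
  0 < s -> f (hadd x (hscal s d)) <= f x + s * hinner (g x) d + L * s ^ 2 * hnorm d ^ 2.
Proof.
  intros Hs.
  destruct (MVT_cor2 (fun t => f (hadd x (hscal t d)))
             (fun t => hinner (g (hadd x (hscal t d))) d) 0 s Hs) as [c [Hmvt Hc]].
  { intros c _. apply derivable_pt_lim_line. }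
  simpl in Hmvt. rewrite hscal_0_l, hadd_0, Rminus_0_r in Hmvt.
  set (y := hadd x (hscal c d)) in *.
  assert (HN := hnorm_ge0 d).
  assert (Hlip : hnorm (hadd (g y) (hopp (g x))) <= L * (c * hnorm d)).
  { rewrite <- (Rabs_right c) by lra. rewrite <- hnorm_scal, <- (hadd_subK x (hscal c d)).
    apply HA1. }
  assert (Hcs := cauchy_schwarz (hadd (g y) (hopp (g x))) d).
  rewrite hinner_add, hinner_opp_l in Hcs.
  assert (Hslope : hinner (g y) d <= hinner (g x) d + L * s * hnorm d ^ 2).
  { assert (hnorm (hadd (g y) (hopp (g x))) * hnorm d <= L * (c * hnorm d) * hnorm d)
      by (apply Rmult_le_compat_r; assumption).
    assert (L * (c * hnorm d) * hnorm d <= L * s * hnorm d ^ 2).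
    { replace (L * (c * hnorm d) * hnorm d) with (c * (L * hnorm d ^ 2)) by ring.
      replace (L * s * hnorm d ^ 2) with (s * (L * hnorm d ^ 2)) by ring.
      apply Rmult_le_compat_r; [apply Rmult_le_pos; [lra | apply pow2_ge_0] | lra]. }
    lra. }
  nra.
Qed.

Lemma armijo_rejected_step_large (rho c1 c2 : R) (x d : X) (s nu : R) :
  rho < 1 -> c1 > 0 -> c2 > 0 -> 0 < s -> 0 <= nu ->
  hinner (g x) d <= - c1 * hnorm (g x) ^ 2 -> hnorm d <= c2 * hnorm (g x) ->
  f x + rho * s * hinner (g x) d + nu < f (hadd x (hscal s d)) ->
  (1 - rho) * c1 / (L * c2 ^ 2) < s.
Proof.
  intros Hrho Hc1 Hc2 Hs Hnu Hangle Hlen Hrej.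
  assert (Hdesc := descent_lemma x d s Hs).
  set (G := hinner (g x) d) in *; set (n := hnorm (g x)) in *.
  assert (Hn : 0 <= n) by apply hnorm_ge0.
  assert (Hd2 : hnorm d ^ 2 <= c2 ^ 2 * n ^ 2).
  { rewrite <- Rpow_mult_distr. apply pow_incr. split; [apply hnorm_ge0 | exact Hlen]. }
  assert (Hgap : 0 < s * ((L * s * c2 ^ 2 - (1 - rho) * c1) * n ^ 2)).
  { assert (s * ((1 - rho) * G) <= s * ((1 - rho) * (- c1 * n ^ 2)))
      by (apply Rmult_le_compat_l; [lra | apply Rmult_le_compat_l; lra]).
    assert (L * s ^ 2 * hnorm d ^ 2 <= L * s ^ 2 * (c2 ^ 2 * n ^ 2))
      by (apply Rmult_le_compat_l; [apply Rmult_le_pos; [lra | apply pow2_ge_0] | exact Hd2]).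
    lra. }
  assert (Hthr : (1 - rho) * c1 < L * s * c2 ^ 2).
  { apply Rnot_le_lt. intro Hle.
    assert (0 <= ((1 - rho) * c1 - L * s * c2 ^ 2) * n ^ 2)
      by (apply Rmult_le_pos; [lra | apply pow2_ge_0]).
    nra. }
  assert (HLc : 0 < L * c2 ^ 2) by (apply Rmult_lt_0_compat; [lra | apply pow_lt; lra]).
  apply Rmult_lt_reg_r with (L * c2 ^ 2); [exact HLc |].
  unfold Rdiv. rewrite Rmult_assoc, Rinv_l, Rmult_1_r by lra. lra.
Qed.

End Descent.

Lemma Un_cv_0_of_sufficient_decrease (a b : nat -> R) (lb delta : R) (n0 : nat) :
  delta > 0 -> (forall k, lb <= a k) -> (forall k, 0 <= b k) ->
  (forall k, (n0 <= k)%nat -> a (S k) <= a k - delta * b k) ->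
  Un_cv b 0.
Proof.
  intros Hdelta Hlb Hb Hdec.
  set (tail := fun j => a (n0 + j)%nat).
  assert (Htail_dec : Un_decreasing tail).
  { intro j. unfold tail. rewrite Nat.add_succ_r.
    assert (Hj := Hdec (n0 + j)%nat ltac:(lia)).
    assert (0 <= delta * b (n0 + j)%nat) by (apply Rmult_le_pos; [lra | apply Hb]).
    lra. }
  assert (Htail_lb : has_lb tail).
  { exists (- lb). intros y [i ->]. unfold opp_seq, tail.
    specialize (Hlb (n0 + i)%nat). lra. }
  destruct (decreasing_cv tail Htail_dec Htail_lb) as [l Hl].
  intros eps Heps.
  destruct (Hl (delta * eps / 2)) as [N HN].
  { assert (0 < delta * eps) by (apply Rmult_lt_0_compat; lra). lra. }
  exists (n0 + N)%nat. intros k Hk.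
  assert (H1 := HN (k - n0)%nat ltac:(lia)).
  assert (H2 := HN (S (k - n0)) ltac:(lia)).
  unfold tail, R_dist in H1, H2.
  replace (n0 + (k - n0))%nat with k in H1 by lia.
  replace (n0 + S (k - n0))%nat with (S k) in H2 by lia.
  apply Rabs_def2 in H1; apply Rabs_def2 in H2.
  assert (Hk_dec := Hdec k ltac:(lia)).
  unfold R_dist. rewrite Rminus_0_r, Rabs_right by (apply Rle_ge, Hb).
  apply Rmult_lt_reg_l with delta; [exact Hdelta | lra].
Qed.

Lemma Un_cv_0_of_sq (u : nat -> R) :
  (forall k, 0 <= u k) -> Un_cv (fun k => u k ^ 2) 0 -> Un_cv u 0.
Proof.
  intros Hu Hsq eps Heps.
  destruct (Hsq (eps ^ 2)) as [N HN]; [apply pow_lt; lra |].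
  exists N. intros k Hk. specialize (HN k Hk).
  unfold R_dist in *. rewrite Rminus_0_r, Rabs_right in * by (apply Rle_ge; try apply pow2_ge_0; apply Hu).
  specialize (Hu k).
  apply Rnot_le_lt. intro Hle.
  assert (eps ^ 2 <= u k ^ 2) by (apply pow_incr; lra).
  lra.
Qed.

Lemma powerRZ_pred_mul (beta : R) (n : nat) :
  beta <> 0 -> beta * powerRZ beta (Z.of_nat n - 1) = beta ^ n.
Proof.
  intros Hb.
  rewrite pow_powerRZ.
  replace (Z.of_nat n) with ((Z.of_nat n - 1) + 1)%Z at 2 by ring.
  rewrite powerRZ_add by exact Hb. simpl. ring.
Qed.

Section Algorithm1.

Context {X : Hilbert} (f : X -> R) (g : X -> X)
  (x0 : X) (alpha0 beta rho : R)
  (x d : nat -> X) (alpha : nat -> R) (lk : nat -> nat) (nu : nat -> nat -> R).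
Hypothesis Hgrad : frechet_gradient f g.
Hypothesis Halg : algorithm1 f g x0 alpha0 beta rho x d alpha lk nu.
Context (L : R) (HL : L > 0)
  (HA1 : forall y z : X, hnorm (hadd (g y) (hopp (g z))) <= L * hnorm (hadd y (hopp z))).
Context (c1 c2 : R) (Hc1 : c1 > 0) (Hc2 : c2 > 0)
  (HA3 : forall k, hinner (g (x k)) (d k) <= - c1 * hnorm (g (x k)) ^ 2 /\
                   hnorm (d k) <= c2 * hnorm (g (x k))).

Let step_floor := Rmin alpha0 ((1 - rho) * c1 / (L * c2 ^ 2)).

Lemma step_floor_pos : 0 < step_floor.
Proof.
  destruct Halg as (Ha0 & Hb & Hr & _).
  apply Rmin_pos; [lra |].
  apply Rdiv_lt_0_compat; [apply Rmult_lt_0_compat; lra |].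
  apply Rmult_lt_0_compat; [lra | apply pow_lt; lra].
Qed.

Lemma accepted_step_eq k : alpha k * beta ^ lk k = beta * alpha (S k).
Proof.
  destruct Halg as (_ & Hb & _ & _ & _ & _ & _ & _ & _ & _ & Halpha).
  rewrite Halpha, <- powerRZ_pred_mul by lra. ring.
Qed.

Lemma step_floor_le_alpha k : step_floor <= alpha k.
Proof.
  destruct Halg as (_ & Hb & Hr & _ & Hal0 & _ & Hnu & _ & Hrej & _).
  induction k as [| k IH].
  - rewrite Hal0. apply Rmin_l.
  - assert (Hfloor := step_floor_pos).
    assert (Hnext := accepted_step_eq k).
    destruct (lk k) as [| l] eqn:Hl.
    + (* nothing was rejected: alpha grows by the factor 1/beta *)
      simpl in Hnext. nra.
    + (* the trial step alpha_k beta^l = alpha_{k+1} was rejected *)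
      assert (Hak : alpha k * beta ^ l = alpha (S k)).
      { simpl in Hnext. apply Rmult_eq_reg_l with beta; [| lra]. lra. }
      assert (Hpos : 0 < alpha (S k)).
      { rewrite <- Hak. apply Rmult_lt_0_compat; [lra | apply pow_lt; lra]. }
      assert (Hrejected := Hrej k l ltac:(lia)).
      unfold armijo_test in Hrejected. apply Rnot_le_lt in Hrejected.
      rewrite (Rmult_assoc rho), Hak in Hrejected.
      destruct (HA3 k) as [Hangle Hlen].
      apply Rle_trans with ((1 - rho) * c1 / (L * c2 ^ 2)); [apply Rmin_r |].
      apply Rlt_le, (armijo_rejected_step_large f g Hgrad L HL HA1 rho c1 c2
                       (x k) (d k) (alpha (S k)) (nu k l)); try lra.
      apply Rge_le, Hnu.
Qed.

Lemma sufficient_decrease k :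
  f (x (S k)) <= f (x k) - rho * c1 * beta * step_floor * hnorm (g (x k)) ^ 2 + nu k (lk k).
Proof.
  destruct Halg as (_ & Hb & Hr & _ & _ & _ & _ & Harm & _ & Hx & _).
  assert (Hacc := Harm k). unfold armijo_test in Hacc.
  rewrite <- Hx, (Rmult_assoc rho), accepted_step_eq in Hacc.
  assert (Hfloor := step_floor_le_alpha (S k)).
  destruct (HA3 k) as [Hangle _].
  set (n := hnorm (g (x k))) in *.
  assert (Hn2 : 0 <= c1 * n ^ 2) by (apply Rmult_le_pos; [lra | apply pow2_ge_0]).
  assert (rho * (beta * alpha (S k)) * hinner (g (x k)) (d k)
            <= - (rho * beta * alpha (S k)) * (c1 * n ^ 2)).
  { replace (- (rho * beta * alpha (S k)) * (c1 * n ^ 2))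
      with (rho * (beta * alpha (S k)) * (- c1 * n ^ 2)) by ring.
    apply Rmult_le_compat_l; [| exact Hangle].
    assert (Hpos := step_floor_pos).
    apply Rmult_le_pos; [lra | apply Rmult_le_pos; lra]. }
  assert (rho * beta * step_floor * (c1 * n ^ 2) <= rho * beta * alpha (S k) * (c1 * n ^ 2)).
  { apply Rmult_le_compat_r; [exact Hn2 |].
    apply Rmult_le_compat_l; [apply Rmult_le_pos |]; lra. }
  lra.
Qed.

End Algorithm1.
Theorem theorem4 (X : Hilbert) (f : X -> R) (g : X -> X)
  (x0 : X) (alpha0 beta rho : R)
  (x d : nat -> X) (alpha : nat -> R) (lk : nat -> nat) (nu : nat -> nat -> R)
  (Hgrad : frechet_gradient f g)
  (Halg : algorithm1 f g x0 alpha0 beta rho x d alpha lk nu)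
  (* A1 *)
  (L : R) (HL : L > 0)
  (HA1 : forall y z : X, hnorm (hadd (g y) (hopp (g z))) <= L * hnorm (hadd y (hopp z)))
  (* A2 *)
  (flow : R) (HA2 : forall y : X, f y >= flow)
  (* A3 *)
  (c1 c2 : R) (Hc1 : c1 > 0) (Hc2 : c2 > 0)
  (HA3 : forall k, hinner (g (x k)) (d k) <= - c1 * hnorm (g (x k)) ^ 2 /\
                   hnorm (d k) <= c2 * hnorm (g (x k)))
  (* A4' *)
  (HA4 : forall delta, delta > 0 -> exists n : nat, forall k, (k >= n)%nat ->
           nu k (lk k) <= delta * hnorm (g (x k)) ^ 2) :
  Un_cv (fun k => hnorm (g (x k))) 0.
Proof.
  pose proof Halg as (_ & Hb & Hr & _).
  set (m := Rmin alpha0 ((1 - rho) * c1 / (L * c2 ^ 2))).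
  assert (Hm : 0 < m) by (eapply step_floor_pos; eassumption).
  set (delta := rho * c1 * beta * m / 2).
  assert (Hdelta : delta > 0).
  { assert (0 < rho * c1 * beta * m) by (repeat apply Rmult_lt_0_compat; lra).
    unfold delta. lra. }
  destruct (HA4 delta Hdelta) as [n0 Hn0].
  apply Un_cv_0_of_sq; [intro k; apply hnorm_ge0 |].
  apply (Un_cv_0_of_sufficient_decrease (fun k => f (x k)) _ flow delta n0 Hdelta).
  - intro k. apply Rge_le, HA2.
  - intro k. apply pow2_ge_0.
  - intros k Hk.
    assert (Hdec := sufficient_decrease f g x0 alpha0 beta rho x d alpha lk nu
                      Hgrad Halg L HL HA1 c1 c2 Hc1 Hc2 HA3 k).
    specialize (Hn0 k Hk). fold m in Hdec. unfold delta in *. lra.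
Qed.
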